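(* Let $a>0$ and $f\in\mathcal C_a$. Then $\mathrm{Sh}_0(f):\mathbb R\to\mathbb R$ satisfies: $\mathrm{Sh}_0(f)(x)=f(x)$ for all $x\le-a$; $\mathrm{Sh}_0(f)(2x+f(x))=f(x)$ for all $x\in(-a,0)$; and $\mathrm{Sh}_0(f)(x)=x$ for all $x\ge f(0)$.
   Context: $\mathcal C_a$ is the set of $C^1$ functions $f:\mathbb R\to\mathbb R$ that are even, satisfy $f(s)=|s|$ for $|s|\ge a$ and are strictly convex on $[-a,a]$. For $f\in\mathcal C_a$ and $\alpha\in[0,1)$: $F_\alpha(s)=f(s)-\alpha s$, $x_\alpha^+=(f')^{-1}(\alpha)\in[0,a)$ (inverse of $f':[-a,a]\to[-1,1]$); let $F_\alpha^{-1}$ be the inverse of $F_\alpha|_{[x_\alpha^+,\infty)}$, $\phi=F_\alpha^{-1}\circ F_\alpha$, $\delta_x=(1-\alpha)^{-1}F_\alpha(x)-\phi(x)$, $s_\alpha=x_\alpha^++\delta_{x_\alpha^+}$; $x\mapsto x+\delta_x$ is an increasing bijection $(-\infty,x_\alpha^+]\to(-\infty,s_\alpha]$ with inverse $\tau$. Define $\mathrm{Sh}_\alpha(f)(x)=\alpha x+F_\alpha(\tau(x))$ for $x\le s_\alpha$ and $=x$ for $x>s_\alpha$. *)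

From Stdlib Require Import Reals Lra ClassicalEpsilon.
From Coquelicot Require Import Coquelicot.
Open Scope R_scope.

Definition in_Ca (a : R) (f : R -> R) : Prop :=
  (forall x, ex_derive f x) /\
  (forall x, continuous (Derive f) x) /\
  (forall s, f (- s) = f s) /\
  (forall s, a <= Rabs s -> f s = Rabs s) /\
  (forall x y t, -a <= x -> x < y -> y <= a -> 0 < t < 1 ->
      f (t * x + (1 - t) * y) < t * f x + (1 - t) * f y).

(* Inverse of g restricted to the domain D (chosen by Hilbert epsilon;
   meaningful when g is a bijection from D onto its range). *)
Definition inv_on (g : R -> R) (D : R -> Prop) (y : R) : R :=
  epsilon (inhabits 0) (fun x => D x /\ g x = y).

Section Shift.
Variables (a alpha : R) (f : R -> R).

Definition Falpha (s : R) : R := f s - alpha * s.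

Definition xplus : R := inv_on (Derive f) (fun x => -a <= x <= a) alpha.

Definition Finv (y : R) : R := inv_on Falpha (fun s => xplus <= s) y.

Definition phi (x : R) : R := Finv (Falpha x).

Definition delta (x : R) : R := Falpha x / (1 - alpha) - phi x.

Definition s_alpha : R := xplus + delta xplus.

Definition tau (y : R) : R := inv_on (fun x => x + delta x) (fun x => x <= xplus) y.

Definition Sh (x : R) : R :=
  if Rle_dec x s_alpha then alpha * x + Falpha (tau x) else x.

End Shift.

From Stdlib Require Import Reals Lra ClassicalEpsilon.
From Coquelicot Require Import Coquelicot.
Open Scope R_scope.

(* For alpha = 0 everything in the definition of Sh_0(f) is explicit on
   (-oo, 0].  Evenness gives f'(0) = 0 and strict convexity makes 0 the only
   zero of f' on [-a, a], so x_0^+ = 0.  Since f is even and strictly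
   increasing on [0, oo), phi(x) = -x, hence delta_x = f(x) + x and
   s_0 = f(0).  The tangent lines of f have slope at least f'(-a) = -1, so
   x + f(x) is nondecreasing and tau inverts x |-> 2x + f(x).  Therefore
   Sh_0(f)(2x + f(x)) = f(x) for every x <= 0; the three claims follow
   because 2x + f(x) = x for x <= -a and f(0) = 2*0 + f(0). *)

Lemma inv_on_unique (g : R -> R) (D : R -> Prop) (y x0 : R) :
  D x0 -> g x0 = y -> (forall x, D x -> g x = y -> x = x0) ->
  inv_on g D y = x0.
Proof.
  intros Dx0 gx0 uniq. unfold inv_on.
  destruct (epsilon_spec (inhabits 0) (fun x => D x /\ g x = y)
              (ex_intro _ x0 (conj Dx0 gx0))) as [Dx gx].
  exact (uniq _ Dx gx).
Qed.

Lemma Derive_le_of_right_quotient (f : R -> R) (x d C : R) :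
  ex_derive f x -> 0 < d ->
  (forall h, 0 < h < d -> (f (x + h) - f x) / h <= C) -> Derive f x <= C.
Proof.
  intros fx d_pos quot. apply Rnot_lt_le. intros C_lt.
  destruct (proj1 (is_derive_Reals _ _ _) (Derive_correct _ _ fx)
              (Derive f x - C) ltac:(lra)) as [del near].
  set (h := Rmin del d / 2).
  assert (h_range : 0 < h /\ h < del /\ h < d).
  { pose proof (Rmin_pos _ _ (cond_pos del) d_pos).
    pose proof (Rmin_l del d). pose proof (Rmin_r del d). unfold h. lra. }
  specialize (near h ltac:(apply Rgt_not_eq; lra) ltac:(rewrite Rabs_right; lra)).
  specialize (quot h ltac:(lra)). apply Rabs_def2 in near. lra.
Qed.

Lemma Derive_ge_of_left_quotient (f : R -> R) (x d C : R) :
  ex_derive f x -> 0 < d ->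
  (forall h, - d < h < 0 -> C <= (f (x + h) - f x) / h) -> C <= Derive f x.
Proof.
  intros fx d_pos quot. apply Rnot_lt_le. intros C_gt.
  destruct (proj1 (is_derive_Reals _ _ _) (Derive_correct _ _ fx)
              (C - Derive f x) ltac:(lra)) as [del near].
  set (h := Rmin del d / 2).
  assert (h_range : 0 < h /\ h < del /\ h < d).
  { pose proof (Rmin_pos _ _ (cond_pos del) d_pos).
    pose proof (Rmin_l del d). pose proof (Rmin_r del d). unfold h. lra. }
  specialize (near (- h) ltac:(apply Ropp_neq_0_compat; lra) ltac:(rewrite Rabs_left; lra)).
  specialize (quot (- h) ltac:(lra)). apply Rabs_def2 in near. lra.
Qed.

Lemma Derive_even_0 (f : R -> R) :
  (forall s, f (- s) = f s) -> ex_derive f 0 -> Derive f 0 = 0.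
Proof.
  intros even f0.
  assert (odd : Derive (fun x => f (- x)) 0 = - Derive f 0).
  { rewrite Derive_comp, Ropp_0, Derive_opp, Derive_id; [ring | |].
    - now rewrite Ropp_0.
    - auto_derive; trivial. }
  rewrite (Derive_ext _ f 0 even) in odd. lra.
Qed.

Section StrictlyConvex.
Variables (f : R -> R) (u v : R).
Hypothesis f_derivable : forall x, u <= x <= v -> ex_derive f x.
Hypothesis f_convex : forall x y t, u <= x -> x < y -> y <= v -> 0 < t < 1 ->
  f (t * x + (1 - t) * y) < t * f x + (1 - t) * f y.

Lemma below_chord p z q : u <= p -> p < z < q -> q <= v ->
  f z < f p + (f q - f p) / (q - p) * (z - p).
Proof.
  intros up pzq qv.
  set (t := (q - z) / (q - p)).
  assert (t_01 : 0 < t < 1).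
  { unfold t. split.
    - apply Rdiv_lt_0_compat; lra.
    - apply Rlt_div_l; lra. }
  pose proof (f_convex p q t up ltac:(lra) qv t_01) as cvx.
  replace (t * p + (1 - t) * q) with z in cvx by (unfold t; field; lra).
  replace (f p + (f q - f p) / (q - p) * (z - p))
    with (t * f p + (1 - t) * f q) by (unfold t; field; lra).
  exact cvx.
Qed.

Lemma midpoint_lt p q : u <= p -> p < q -> q <= v ->
  f ((p + q) / 2) < (f p + f q) / 2.
Proof.
  intros up pq qv. pose proof (below_chord p ((p + q) / 2) q up ltac:(lra) qv).
  replace ((f p + f q) / 2)
    with (f p + (f q - f p) / (q - p) * ((p + q) / 2 - p)) by (field; lra).
  assumption.
Qed.

Lemma Derive_le_slope x y : u <= x -> x < y -> y <= v ->
  Derive f x <= (f y - f x) / (y - x).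
Proof.
  intros ux xy yv.
  apply (Derive_le_of_right_quotient f x (y - x)); [apply f_derivable; lra | lra |].
  intros h h_range. apply Rle_div_l; [lra |].
  pose proof (below_chord x (x + h) y ux ltac:(lra) yv) as chord.
  replace (x + h - x) with h in chord by ring. lra.
Qed.

Lemma slope_le_Derive x y : u <= y -> y < x -> x <= v ->
  (f x - f y) / (x - y) <= Derive f x.
Proof.
  intros uy yx xv.
  apply (Derive_ge_of_left_quotient f x (x - y)); [apply f_derivable; lra | lra |].
  intros h h_range.
  replace ((f (x + h) - f x) / h) with ((f x - f (x + h)) / - h) by (field; lra).
  apply Rle_div_r with (c := - h); [lra |].
  pose proof (below_chord y (x + h) x uy ltac:(lra) xv) as chord.
  replace (f y + (f x - f y) / (x - y) * (x + h - y))
    with (f x + (f x - f y) / (x - y) * h) in chord by (field; lra).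
  lra.
Qed.

Lemma tangent_le x y : u <= x <= v -> u <= y <= v ->
  f x + Derive f x * (y - x) <= f y.
Proof.
  intros xuv yuv. destruct (Rtotal_order x y) as [xy | [<- | yx]].
  - pose proof (Derive_le_slope x y ltac:(lra) xy ltac:(lra)) as slope.
    apply Rle_div_r in slope; lra.
  - lra.
  - pose proof (slope_le_Derive x y ltac:(lra) yx ltac:(lra)) as slope.
    apply Rle_div_l in slope; lra.
Qed.

Lemma tangent_lt x y : u <= x <= v -> u <= y <= v -> x <> y ->
  f x + Derive f x * (y - x) < f y.
Proof.
  intros xuv yuv xy.
  pose proof (tangent_le x ((x + y) / 2) xuv ltac:(lra)).
  assert (f ((x + y) / 2) < (f x + f y) / 2).
  { destruct (Rtotal_order x y) as [lt | [eq | gt]]; [| contradiction |].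
    - apply midpoint_lt; lra.
    - rewrite Rplus_comm, (Rplus_comm (f x)). apply midpoint_lt; lra. }
  lra.
Qed.

Lemma Derive_monotone x y : u <= x -> x <= y -> y <= v ->
  Derive f x <= Derive f y.
Proof.
  intros ux xy yv. destruct (Req_dec x y) as [<- | neq]; [lra |].
  pose proof (tangent_le x y ltac:(lra) ltac:(lra)).
  pose proof (tangent_le y x ltac:(lra) ltac:(lra)).
  nra.
Qed.

End StrictlyConvex.

Section ClassCa.
Variables (a : R) (f : R -> R).
Hypothesis a_pos : 0 < a.
Hypothesis f_Ca : in_Ca a f.

Let f_derivable : forall x, ex_derive f x := proj1 f_Ca.
Let f_even : forall s, f (- s) = f s := proj1 (proj2 (proj2 f_Ca)).
Let f_abs : forall s, a <= Rabs s -> f s = Rabs s :=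
  proj1 (proj2 (proj2 (proj2 f_Ca))).
Let f_convex : forall x y t, - a <= x -> x < y -> y <= a -> 0 < t < 1 ->
  f (t * x + (1 - t) * y) < t * f x + (1 - t) * f y :=
  proj2 (proj2 (proj2 (proj2 f_Ca))).

Lemma Ca_left s : s <= - a -> f s = - s.
Proof.
  intros s_le. rewrite f_abs; rewrite Rabs_left; lra.
Qed.

Lemma Ca_right s : a <= s -> f s = s.
Proof.
  intros s_ge. rewrite f_abs; rewrite Rabs_right; lra.
Qed.

Lemma Ca_increasing s s' : 0 <= s -> s < s' -> f s < f s'.
Proof.
  intros s_nneg ss'.
  assert (inside : forall r, s < r -> r <= a -> f s < f r).
  { (* the chord of f between -r and r is horizontal *)
    intros r sr ra.
    pose proof (below_chord f (- a) a f_convex (- r) s r ltac:(lra) ltac:(lra) ra)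
      as chord.
    rewrite f_even in chord.
    replace (f r + (f r - f r) / (r - - r) * (s - - r)) with (f r) in chord
      by (field; lra).
    exact chord. }
  destruct (Rle_dec s' a) as [s'a | s'a]; [now apply inside |].
  rewrite (Ca_right s') by lra.
  destruct (Rle_lt_dec a s) as [a_le_s | sa].
  - rewrite Ca_right; lra.
  - pose proof (inside a sa (Rle_refl a)) as below_a.
    rewrite (Ca_right a) in below_a by lra. lra.
Qed.

Lemma Ca_xplus : xplus a 0 f = 0.
Proof.
  apply inv_on_unique; [lra | now apply Derive_even_0 |].
  intros x x_range Dx. apply NNPP. intros x_neq.
  pose proof (tangent_lt f (- a) a (fun x _ => f_derivable x) f_convex
                x (- x) x_range ltac:(lra) ltac:(lra)).
  rewrite f_even, Dx in *. lra.
Qed.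

Lemma Ca_phi x : x <= 0 -> phi a 0 f x = - x.
Proof.
  intros x_nonpos. unfold phi, Finv. rewrite Ca_xplus.
  apply inv_on_unique; [lra | unfold Falpha; rewrite f_even; ring |].
  intros s s_nneg fs. unfold Falpha in fs. rewrite <- (f_even x) in fs.
  destruct (Rtotal_order s (- x)) as [lt | [eq | gt]]; [| exact eq |].
  - pose proof (Ca_increasing s (- x) s_nneg lt). lra.
  - pose proof (Ca_increasing (- x) s ltac:(lra) gt). lra.
Qed.

Lemma Ca_delta x : x <= 0 -> delta a 0 f x = f x + x.
Proof.
  intros x_nonpos. unfold delta. rewrite Ca_phi by exact x_nonpos.
  unfold Falpha. field.
Qed.

Lemma Ca_Derive_ge x : - a <= x <= a -> - 1 <= Derive f x.
Proof.
  intros x_range.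
  assert (at_minus_a : - 1 <= Derive f (- a)).
  { apply (Derive_ge_of_left_quotient f (- a) 1); [apply f_derivable | lra |].
    intros h h_range. rewrite !Ca_left by lra. apply Req_le. field. lra. }
  pose proof (Derive_monotone f (- a) a (fun x _ => f_derivable x) f_convex
                (- a) x (Rle_refl _) (proj1 x_range) (proj2 x_range)).
  lra.
Qed.

Lemma Ca_plus_id_le x y : x <= y -> y <= a -> f x + x <= f y + y.
Proof.
  intros xy ya.
  assert (inside : forall z, - a <= z <= y -> f z + z <= f y + y).
  { intros z z_range.
    pose proof (tangent_le f (- a) a (fun x _ => f_derivable x) f_convex
                  z y ltac:(lra) ltac:(lra)).
    pose proof (Ca_Derive_ge z ltac:(lra)).
    nra. }
  destruct (Rle_lt_dec x (- a)) as [xl | xl]; [| apply inside; lra].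
  rewrite (Ca_left x xl).
  destruct (Rle_lt_dec y (- a)) as [yl | yl]; [rewrite (Ca_left y yl); lra |].
  pose proof (inside (- a) ltac:(lra)) as from_minus_a.
  rewrite (Ca_left (- a)) in from_minus_a by lra. lra.
Qed.

Lemma Ca_tau x : x <= 0 -> tau a 0 f (2 * x + f x) = x.
Proof.
  intros x_nonpos. unfold tau. rewrite Ca_xplus.
  apply inv_on_unique; [exact x_nonpos | rewrite Ca_delta by lra; ring |].
  intros y y_nonpos Ey. rewrite Ca_delta in Ey by exact y_nonpos.
  destruct (Rtotal_order y x) as [lt | [eq | gt]]; [| exact eq |].
  - pose proof (Ca_plus_id_le y x ltac:(lra) ltac:(lra)). lra.
  - pose proof (Ca_plus_id_le x y ltac:(lra) ltac:(lra)). lra.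
Qed.

Lemma Ca_s_alpha : s_alpha a 0 f = f 0.
Proof.
  unfold s_alpha. rewrite Ca_xplus, Ca_delta by lra. ring.
Qed.

Lemma Ca_Sh_graph x : x <= 0 -> Sh a 0 f (2 * x + f x) = f x.
Proof.
  intros x_nonpos. unfold Sh. rewrite Ca_s_alpha.
  pose proof (Ca_plus_id_le x 0 x_nonpos ltac:(lra)).
  destruct (Rle_dec (2 * x + f x) (f 0)) as [_ | not_below]; [| lra].
  rewrite Ca_tau by exact x_nonpos. unfold Falpha. ring.
Qed.

End ClassCa.

Theorem corollary3p19 (a : R) (f : R -> R) :
  0 < a -> in_Ca a f ->
  (forall x, x <= - a -> Sh a 0 f x = f x) /\
  (forall x, - a < x < 0 -> Sh a 0 f (2 * x + f x) = f x) /\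
  (forall x, f 0 <= x -> Sh a 0 f x = x).
Proof.
  intros a_pos f_Ca.
  pose proof (Ca_Sh_graph a f a_pos f_Ca) as graph.
  split; [| split].
  - intros x x_le. transitivity (Sh a 0 f (2 * x + f x)).
    + f_equal. rewrite (Ca_left a f a_pos f_Ca x x_le). ring.
    + apply graph; lra.
  - intros x x_range. apply graph; lra.
  - intros x x_ge. destruct (Req_dec x (f 0)) as [-> | neq].
    + specialize (graph 0 (Rle_refl 0)).
      now rewrite Rmult_0_r, Rplus_0_l in graph.
    + unfold Sh. rewrite (Ca_s_alpha a f a_pos f_Ca).
      destruct (Rle_dec x (f 0)); [lra | reflexivity].
Qed.
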